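(* Assume the setting below. Let $j\in\mathbb{N}$ and let $w\in F_j$ with $\mathrm{len}(w)>(1,0)$. Then \[|Z_j(w)|\le \mathrm{len}_B(w)\,m_j\,(|Y_j|+|Y_j'|).\]
   Context: Setting: $Q,G$ are groups and $X=(X_n)_{n\in\mathbb{N}}$ is a sequence of finite sets with $|X_n|\ge2$, each with actions of $Q$ and $G$; $Q_n,G_n\subseteq\mathrm{Sym}(X_n)$ are the images and $A_n=\langle Q_n,G_n\rangle$. Assume for all $n$: (A1) $G,Q$ finitely generated; (A2) $Q$ perfect; (A3) $A_n$ is transitive on $X_n$ and generated by the $G_n$-conjugates of $Q_n$. $\mathcal{T}_j$ is the rooted tree of finite words $x_j\cdots x_k$ ($x_i\in X_i$), $\mathrm{Aut}(\mathcal{T}_j)$ its root-fixing automorphisms; sections $h|_u\in\mathrm{Aut}(\mathcal{T}_{j+\ell})$ (for $u$ of level $\ell$) are defined by $h(uv)=h(u)h|_u(v)$. $A_j$ acts by rooted automorphisms $a\cdot x_jx_{j+1}\cdots x_k=(ax_j)x_{j+1}\cdots x_k$ and is identified with its image; $q_j,g_j$ denote images of $q\in Q,g\in G$ in $A_j$. A point $o\in X_i$ is fixed in each $X_i$; $\mathcal{S}=\prod_{i\ge1}(X_i\setminus\{o\})$. For $\alpha\in\mathcal{S}$, $q\in Q$, $\tilde q^\alpha_{[j]}\in\mathrm{Aut}(\mathcal{T}_j)$ acts trivially on the first level with section at $x\in X_j$ equal to $\tilde q^\alpha_{[j+1]}$ if $x=o$, $q_{j+1}$ if $x=\alpha_j$,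 identity otherwise; analogously $\tilde g^\beta_{[j]}$ for $\beta\in\mathcal{S}$, $g\in G$. Let $\Gamma_j^{\alpha,\beta}=\langle A_j,\tilde q^\alpha_{[j]},\tilde g^\beta_{[j]}: q\in Q,g\in G\rangle$. For every $i$, $Y_i,Y_i'\subseteq X_i\setminus\{o\}$ are non-empty disjoint subsets, $\mathcal{Y}=\prod_iY_i$, $\mathcal{Y}'=\prod_iY_i'$, and $m_j$ is the maximal order of an element of $A_j$. For $(\alpha,\beta)\in\mathcal{Y}\times\mathcal{Y}'$ we have $\alpha_i\neq\beta_i$ for all $i$, so the elements $\tilde q^\alpha_{[j]}$ and $\tilde g^\beta_{[j]}$ commute and there is a homomorphism $f_j^{\alpha,\beta}$ from the free product $F_j=A_j*B$, $B=Q\times G$, onto $\Gamma_j^{\alpha,\beta}$, sending $a\in A_j$ to $a$, $q\in Q$ to $\tilde q^\alpha_{[j]}$ and $g\in G$ to $\tilde g^\beta_{[j]}$. Lengths: each $w\in F_j$ has a unique normal form alternating between non-trivial letters from $A_j$ and from $B$; $\mathrm{len}_B(w)$ and $\mathrm{len}_A(w)$ are the numbers of $B$-letters and $A_j$-letters, and $\mathrm{len}(w)=(\mathrm{len}_B(w),\mathrm{len}_A(w))$, with $\mathbb{Z}\times\mathbb{Z}$ ordered lexicographically ($(b,a)>(b',a')$ iff $b>b'$, or $b=b'$ and $a>a'$). For $\gamma\in\Gamma_j^{\alpha,\beta}$, $\mathrm{len}(\gamma)=(\mathrm{len}_B(\gamma),\mathrm{len}_A(\gamma))$ is the minimum of $\mathrm{len}(w)$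 over $w\in F_j$ with $f_j^{\alpha,\beta}(w)=\gamma$ (for elements of $\Gamma_{j+1}^{\alpha,\beta}$ this is taken with respect to $F_{j+1}$ and $f_{j+1}^{\alpha,\beta}$). Stabilized sections: for $h\in\mathrm{Aut}(\mathcal{T}_j)$ and a vertex $u$, $\ell_u(h)$ is the length of the orbit of $u$ under $\langle h\rangle$ and $h\Vert_u=h^{\ell_u(h)}|_u$; for $x\in X_j$ and $\gamma\in\Gamma_j^{\alpha,\beta}$, $\gamma\Vert_x\in\Gamma_{j+1}^{\alpha,\beta}$. The set $Z_j(w)\subseteq Y_j\times Y_j'$: if $\mathrm{len}_B(w)>1$, it consists of the pairs $(s,t)$ for which there exist a vertex $x\in X_j$ and $(\alpha,\beta)\in\mathcal{Y}\times\mathcal{Y}'$ with $\alpha_j=s$, $\beta_j=t$ and $\mathrm{len}_B(f_j^{\alpha,\beta}(w)\Vert_x)=\mathrm{len}_B(w)$; if $\mathrm{len}_B(w)=1$, it consists of the pairs $(s,t)$ for which there exist $x\in X_j$ and $(\alpha,\beta)\in\mathcal{Y}\times\mathcal{Y}'$ with $\alpha_j=s$, $\beta_j=t$ and $\mathrm{len}(f_j^{\alpha,\beta}(w)\Vert_x)>(1,0)$. *)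

From HB Require Import structures.
From mathcomp Require Import all_boot all_order all_fingroup.
From mathcomp Require Import boolp.
Set Implicit Arguments. Unset Strict Implicit. Unset Printing Implicit Defensive.

Section AbstractGroups.
Local Open Scope group_scope.
Variable Γ : groupType.

Inductive gen_by (S : Γ -> Prop) : Γ -> Prop :=
| gen_base x : S x -> gen_by S x
| gen_one : gen_by S 1
| gen_mul x y : gen_by S x -> gen_by S y -> gen_by S (x * y)
| gen_inv x : gen_by S x -> gen_by S x^-1.

Definition fin_generated : Prop := exists s : seq Γ, forall x, gen_by (fun y => y \in s) x.
Definition perfect_group : Prop :=
  forall x, gen_by (fun c => exists a b : Γ, c = a^-1 * b^-1 * a * b) x.
End AbstractGroups.

Section Trees.
Variable X : nat -> finType.

(* a finite word x_j x_{j+1} ... x_k with x_i in X_i, i.e. a vertex of T_j *)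
Inductive word : nat -> Type :=
| wnil j : word j
| wcons j (x : X j) (v : word j.+1) : word j.
Arguments wnil : clear implicits.

Definition wtail j (w : word j) : word j.+1 :=
  match w in word k return word k.+1 with
  | wnil k => wnil k.+1
  | wcons _ _ v => v
  end.

Definition whead j (d : X j) (w : word j) : X j :=
  match w in word k return X k -> X k with
  | wnil _ => fun d => d
  | wcons _ x _ => fun _ => x
  end d.

Definition permact j (a : {perm X j}) (w : word j) : word j :=
  match w in word k return (X k -> X k) -> word k with
  | wnil k => fun _ => wnil k
  | wcons _ x v => fun f => wcons (f x) v
  end (fun x => a x).

Definition lvl1 j (h : word j -> word j) (x : X j) : X j := whead x (h (wcons x (wnil j.+1))).

(* section of h at a first-level vertex x: h(x v) = h(x) h|_x(v) *)
Definition section j (h : word j -> word j) (x : X j) : word j.+1 -> word j.+1 :=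
  fun v => wtail (h (wcons x v)).

(* stabilized section h||_x = h^{l_x(h)}|_x, l_x(h) = length of the <h>-orbit of x *)
Definition stab_section j (h : word j -> word j) (x : X j) : word j.+1 -> word j.+1 :=
  section (iter (fingraph.order (lvl1 h) x) h) x.

End Trees.
Arguments wnil {X} j.
Arguments wcons {X j} x v.

Section Setting.
Variable X : nat -> finType.
Variable o : forall n, X n.
Variables Q G : groupType.
Variable rQ : forall n, Q -> {perm X n}.
Variable rG : forall n, G -> {perm X n}.

Definition Qimg n : {set {perm X n}} := [set s | `[< exists q, rQ n q = s >]].
Definition Gimg n : {set {perm X n}} := [set s | `[< exists g, rG n g = s >]].
Definition Agrp n : {set {perm X n}} := <<Qimg n :|: Gimg n>>%g.

Definition mA n : nat := \max_(a in Agrp n) #[a]%g.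

Fixpoint tq (alpha : forall i, X i) (q : Q) j (w : word X j) {struct w} : word X j :=
  match w in word _ k return word X k with
  | wnil k => wnil k
  | wcons k x v =>
      if x == o k then wcons x (tq alpha q v)
      else if x == alpha k then wcons x (permact (rQ k.+1 q) v)
      else wcons x v
  end.

Fixpoint tg (beta : forall i, X i) (g : G) j (w : word X j) {struct w} : word X j :=
  match w in word _ k return word X k with
  | wnil k => wnil k
  | wcons k x v =>
      if x == o k then wcons x (tg beta g v)
      else if x == beta k then wcons x (permact (rG k.+1 g) v)
      else wcons x v
  end.

(* letters of the free product F_j = A_j * B, B = Q x G *)
Definition letter j : Type := ({perm X j} + (Q * G))%type.

(* w is a reduced word (normal form) of F_j: non-trivial letters alternating between A_j and B *)
Definition good_letter j (l : letter j) : Prop :=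
  match l with
  | inl a => a \in Agrp j /\ a <> 1%g
  | inr b => b <> (1%g, 1%g)
  end.

Fixpoint alternating j (w : seq (letter j)) : Prop :=
  match w with
  | [::] => True
  | l :: w' =>
      match w' with
      | [::] => True
      | l' :: _ => is_inl l <> is_inl l' /\ alternating w'
      end
  end.

Definition reduced j (w : seq (letter j)) : Prop :=
  (forall l, l \in w -> good_letter l) /\ alternating w.

(* the homomorphism f_j^{alpha,beta} : F_j -> Gamma_j^{alpha,beta} evaluated on normal forms
   (automorphisms are functions on vertices, composed as (h h')(v) = h (h' v)) *)
Definition eval_letter (alpha beta : forall i, X i) j (l : letter j) : word X j -> word X j :=
  match l with
  | inl a => permact a
  | inr (q, g) => fun v => tq alpha q (tg beta g v)
  end.

Definition f_eval (alpha beta : forall i, X i) j (w : seq (letter j)) : word X j -> word X j :=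
  foldr (fun l h => fun v => eval_letter alpha beta l (h v)) id w.

Definition lenB j (w : seq (letter j)) : nat := count (fun l => ~~ is_inl l) w.
Definition lenA j (w : seq (letter j)) : nat := count (fun l => is_inl l) w.
Definition len j (w : seq (letter j)) : nat * nat := (lenB w, lenA w).

Definition lex_lt (p p' : nat * nat) : Prop :=
  (p.1 < p'.1)%N \/ (p.1 = p'.1 /\ (p.2 < p'.2)%N).
Definition lex_le (p p' : nat * nat) : Prop := p = p' \/ lex_lt p p'.

Definition has_len (alpha beta : forall i, X i) j (gamma : word X j -> word X j) (p : nat * nat)
  : Prop :=
  (exists w, reduced w /\ f_eval alpha beta w =1 gamma /\ len w = p) /\
  (forall w, reduced w -> f_eval alpha beta w =1 gamma -> lex_le p (len w)).

Variables Y Y' : forall i, {set X i}.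

Definition in_prod (S : forall i, {set X i}) (alpha : forall i, X i) : Prop :=
  forall i, alpha i \in S i.

Definition Zcond (alpha beta : forall i, X i) j (w : seq (letter j)) (x : X j) : Prop :=
  let gx := stab_section (f_eval alpha beta w) x in
  if (1 < lenB w)%N then exists p, has_len alpha beta gx p /\ p.1 = lenB w
  else if lenB w == 1%N then exists p, has_len alpha beta gx p /\ lex_lt (1%N, 0%N) p
  else False.

Definition Zset j (w : seq (letter j)) : {set X j * X j} :=
  [set st | (st.1 \in Y j) && (st.2 \in Y' j) &&
     `[< exists (x : X j) (alpha beta : forall i, X i),
           [/\ in_prod Y alpha, in_prod Y' beta, alpha j = st.1, beta j = st.2
             & Zcond alpha beta w x] >]].

End Setting.

From HB Require Import structures.
From mathcomp Require Import all_boot all_order all_fingroup.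
From mathcomp Require Import boolp.
From mathcomp Require Import zify.
Set Implicit Arguments. Unset Strict Implicit. Unset Printing Implicit Defensive.

(* The permutation induced by f(w) on X_j is the product s of the A_j-letters of
   w, and its section at a vertex y is the image of the word obtained by
   replacing each B-letter (q,g), entered at the vertex t y, by (q,g) if t y = o,
   by q_{j+1} if t y = alpha_j, by g_{j+1} if t y = beta_j, and by nothing
   otherwise; the stabilized section at x concatenates these words along one
   period of the s-orbit of x.  Let t_1, ..., t_b (b = len_B w) be the entry
   permutations of the B-letters and P = {t_k z | z in the s-orbit of
   t_1^-1 o}, so |P| <= b m_j.  If alpha_j, beta_j are not in P, then either x
   lies in that orbit, no q_{j+1} or g_{j+1} occurs, and the word reduces to at
   most one B-letter, so len(f(w)||_x) <= (1,0); or it does not, the first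
   B-letter contributes no B-letter and every other one at most one, so
   len_B(f(w)||_x) < b.  Both contradict (alpha_j, beta_j) in Z_j(w), hence
   Z_j(w) is contained in P x Y'_j u Y_j x P. *)


Lemma lenB_cat (X : nat -> finType) (Q G : groupType) j (u v : seq (letter X Q G j)) :
  lenB (u ++ v) = lenB u + lenB v.
Proof. exact: count_cat. Qed.

Lemma lenA_cat (X : nat -> finType) (Q G : groupType) j (u v : seq (letter X Q G j)) :
  lenA (u ++ v) = lenA u + lenA v.
Proof. exact: count_cat. Qed.

Lemma sum_iter_order_eq (T : finType) (f : T -> T) x z :
  \sum_(i < fingraph.order f x) (iter i f x == z : nat) = fconnect f x z.
Proof.
have sum_traject n : \sum_(i < n) (iter i f x == z : nat) = count_mem z (traject f x n).
  elim: n => [|n IH]; first by rewrite big_ord0.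
  by rewrite big_ord_recr IH trajectSr -cats1 count_cat /= addn0 eq_sym.
by rewrite sum_traject count_uniq_mem ?orbit_uniq // fconnect_orbit.
Qed.

Lemma order_orbit_le_order (T : finType) (s : {perm T}) z :
  fingraph.order s z <= #[s]%g.
Proof.
have loop_s : looping s z #[s]%g.
  rewrite /looping -permX expg_order perm1 -(prednK (order_gt0 s)) /=.
  exact: mem_head.
rewrite /fingraph.order -(size_traject s z #[s]%g).
apply: leq_trans (card_size _); apply: subset_leq_card; apply/subsetP => y.
by rewrite inE => /iter_findex <-; apply: (loopingP loop_s).
Qed.

Section FirstLevelSections.
Variable X : nat -> finType.
Variable o : forall n, X n.
Variables Q G : groupType.
Variable rQ : forall n, Q -> {perm X n}.
Variable rG : forall n, G -> {perm X n}.
Variables alpha beta : forall i, X i.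

Local Notation fe := (f_eval o rQ rG alpha beta).
Local Notation L j := (letter X Q G j).

Lemma f_eval_cat j (u u' : seq (L j)) v : fe (u ++ u') v = fe u (fe u' v).
Proof. by elim: u => //= l u ->. Qed.

Definition letter_perm j (l : L j) : {perm X j} := if l is inl a then a else 1%g.

Fixpoint word_perm j (w : seq (L j)) : {perm X j} :=
  if w is l :: w' then (word_perm w' * letter_perm l)%g else 1%g.

Definition letter_section j (l : L j) (y : X j) : seq (L j.+1) :=
  match l with
  | inl _ => [::]
  | inr (q, g) =>
      if y == o j then [:: inr (q, g)]
      else (if y == alpha j then [:: inl (rQ j.+1 q)] else [::]) ++
           (if y == beta j then [:: inl (rG j.+1 g)] else [::])
  end.

Fixpoint word_section j (w : seq (L j)) (y : X j) : seq (L j.+1) :=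
  if w is l :: w' then letter_section l (word_perm w' y) ++ word_section w' y else [::].

Fixpoint iter_section j (w : seq (L j)) k (y : X j) : seq (L j.+1) :=
  if k is k'.+1 then word_section w (iter k' (word_perm w) y) ++ iter_section w k' y
  else [::].

Lemma eval_letter_wcons j (l : L j) y v :
  eval_letter o rQ rG alpha beta l (wcons y v) =
  wcons (letter_perm l y) (fe (letter_section l y) v).
Proof.
case: l => [a|[q g]] //=; rewrite perm1.
have [->|hyo] := eqVneq y (o j); first by rewrite /= eqxx.
by case hb: (y == beta j); case ha: (y == alpha j); rewrite /= ?(negbTE hyo) ?ha ?hb.
Qed.

Lemma f_eval_wcons j (w : seq (L j)) y v :
  fe w (wcons y v) = wcons (word_perm w y) (fe (word_section w y) v).
Proof.
elim: w => [|l w IH] /=; first by rewrite perm1.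
by rewrite IH eval_letter_wcons f_eval_cat permM.
Qed.

Lemma iter_f_eval_wcons j (w : seq (L j)) k y v :
  iter k (fe w) (wcons y v) =
  wcons (iter k (word_perm w) y) (fe (iter_section w k y) v).
Proof. by elim: k => //= k ->; rewrite f_eval_wcons f_eval_cat. Qed.

Lemma stab_section_f_eval j (w : seq (L j)) x :
  stab_section (fe w) x =1 fe (iter_section w (fingraph.order (word_perm w) x) x).
Proof.
have lvl1_fe : lvl1 (fe w) = word_perm w.
  by apply: funext => y; rewrite /lvl1 f_eval_wcons.
by move=> v; rewrite /stab_section /section lvl1_fe iter_f_eval_wcons.
Qed.

(* [entry_perms w] lists, for each B-letter of [w] from left to right, the
   permutation of [X j] applied to a vertex before it reaches that letter. *)
Fixpoint entry_perms j (w : seq (L j)) : seq {perm X j} :=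
  if w is l :: w' then
    (if l is inr _ then word_perm w' :: entry_perms w' else entry_perms w')
  else [::].

Lemma size_entry_perms j (w : seq (L j)) : size (entry_perms w) = lenB w.
Proof. by elim: w => //= [[a|b]] w /= ->. Qed.

Lemma lenB_word_section j (w : seq (L j)) y :
  lenB (word_section w y) = count (fun t : {perm X j} => t y == o j) (entry_perms w).
Proof.
elim: w => //= l w IH; rewrite lenB_cat IH.
case: l => [a|[q g]] //=; case: (word_perm w y == o j) => //=.
by case: (_ == alpha j); case: (_ == beta j).
Qed.

Lemma lenB_iter_section j (w : seq (L j)) k y :
  lenB (iter_section w k y) =
  \sum_(t <- entry_perms w) \sum_(i < k) (t (iter i (word_perm w) y) == o j : nat).
Proof.
elim: k => [|k IH] /=; first by rewrite big1 // => t _; rewrite big_ord0.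
rewrite lenB_cat IH lenB_word_section -sum1_count big_mkcond /=.
by rewrite addnC -big_split; apply: eq_bigr => t _; rewrite big_ord_recr.
Qed.

Lemma lenA_word_section j (w : seq (L j)) y :
  all (fun t : {perm X j} => (t y != alpha j) && (t y != beta j)) (entry_perms w) ->
  lenA (word_section w y) = 0.
Proof.
elim: w => //= l w IH; rewrite lenA_cat.
case: l => [a|[q g]] /=; first by move/IH.
case/andP => /andP[/negbTE-> /negbTE->] /IH ->.
by case: (_ == o j).
Qed.

Lemma lenA_iter_section j (w : seq (L j)) k y :
  (forall i, i < k -> all (fun t : {perm X j} =>
     (t (iter i (word_perm w) y) != alpha j) && (t (iter i (word_perm w) y) != beta j))
     (entry_perms w)) ->
  lenA (iter_section w k y) = 0.
Proof.
elim: k => //= k IH hk; rewrite lenA_cat.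
by rewrite lenA_word_section ?hk // IH // => i /ltnW; apply: hk.
Qed.

Definition crit_set j (w : seq (L j)) : {set X j} :=
  let z0 := ((head 1 (entry_perms w))^-1)%g (o j) in
  [set (p.1 : {perm X j}) p.2 |
    p in setX [set t | t \in entry_perms w] [set z | fconnect (word_perm w) z0 z]].

Lemma card_crit_set j (w : seq (L j)) : #|crit_set w| <= lenB w * #[word_perm w]%g.
Proof.
apply: leq_trans (leq_imset_card _ _) _; rewrite cardsX leq_mul //.
  by rewrite cardsE -size_entry_perms card_size.
by rewrite cardsE order_orbit_le_order.
Qed.

Lemma iter_section_short j (w : seq (L j)) x :
  0 < lenB w -> alpha j \notin crit_set w -> beta j \notin crit_set w ->
  let u := iter_section w (fingraph.order (word_perm w) x) x in
  lenB u < lenB w \/ lenA u = 0.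
Proof.
move=> lenB_gt0 alpha_crit beta_crit u.
set s := word_perm w; set z0 := ((head 1 (entry_perms w))^-1)%g (o j).
have [x_z0|x_z0] := boolP (fconnect s x z0).
  right; apply: lenA_iter_section => i _; apply/allP => t t_in.
  have crit_t : t (iter i s x) \in crit_set w.
    apply/imsetP; exists (t, iter i s x) => //; rewrite in_setX !inE t_in /=.
    apply: connect_trans (fconnect_iter _ _ _).
    by rewrite (fconnect_sym (@perm_inj _ _)).
  by apply/andP; split; [apply: contraNneq alpha_crit | apply: contraNneq beta_crit] => <-.
left; rewrite /u lenB_iter_section -size_entry_perms.
move: x_z0 lenB_gt0; rewrite -size_entry_perms /z0.
case: (entry_perms w) => [|t0 ts] //= x_z0 _; rewrite big_cons ltnS.
have hits (t : {perm X j}) : \sum_(i < fingraph.order s x) (t (iter i s x) == o j : nat) =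
              fconnect s x ((t^-1)%g (o j)).
  by rewrite -sum_iter_order_eq; apply: eq_bigr => i _; rewrite (canF_eq (permK t)).
rewrite hits (negbTE x_z0) add0n -sum1_size leq_sum // => t _.
by rewrite hits leq_b1.
Qed.

End FirstLevelSections.

Section Reduction.
Variable X : nat -> finType.
Variables Q G : groupType.
Variable rQ : forall n, Q -> {perm X n}.
Variable rG : forall n, G -> {perm X n}.

Local Notation L j := (letter X Q G j).

Definition reduce_cons j (l : L j) (r : seq (L j)) : seq (L j) :=
  match l with
  | inl a =>
      match r with
      | inl b :: r' => if (b * a)%g == 1%g then r' else inl (b * a)%g :: r'
      | _ => if a == 1%g then r else inl a :: r
      end
  | inr (q, g) =>
      match r with
      | inr (q', g') :: r' =>
          if ((q * q')%g, (g * g')%g) == (1%g, 1%g) then r'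
          else inr ((q * q')%g, (g * g')%g) :: r'
      | _ => if (q, g) == (1%g, 1%g) then r else inr (q, g) :: r
      end
  end.

Definition reduce j (u : seq (L j)) : seq (L j) := foldr (@reduce_cons j) [::] u.

Definition letter_in_A j (l : L j) : bool :=
  if l is inl a then a \in Agrp rQ rG j else true.

Lemma reduced_consP j (l : L j) r :
  reduced rQ rG (l :: r) <->
  [/\ good_letter rQ rG l, reduced rQ rG r &
      if r is l' :: _ then is_inl l <> is_inl l' else True].
Proof.
split.
  case=> good_lr alt_lr; split.
  - by apply: good_lr; rewrite mem_head.
  - split; first by move=> l' l'_r; apply: good_lr; rewrite in_cons l'_r orbT.
    by case: r alt_lr {good_lr} => //= l' r [].
  - by case: r alt_lr {good_lr} => //= l' r [].
case=> good_l [good_r alt_r] head_ok; split.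
  by move=> l'; rewrite in_cons => /orP[/eqP->|]; [|apply: good_r].
by case: r head_ok alt_r {good_r} => //= l' r.
Qed.

Lemma reduced_reduce_cons j (l : L j) r :
  letter_in_A l -> reduced rQ rG r -> reduced rQ rG (reduce_cons l r).
Proof.
case: l => [a|[q g]] /= a_A.
  case: r => [|[b|bb] r] /=.
  - by move=> _; case: eqP => // a1; apply/reduced_consP.
  - move/reduced_consP => [[b_A _] red_r head_r].
    by case: eqP => // ba1; apply/reduced_consP; split => //; split => //; apply: groupM.
  - by move=> red_r; case: eqP => // a1; apply/reduced_consP.
case: r => [|[b|[q' g']] r] /=.
- by move=> _; case: eqP => // qg1; apply/reduced_consP.
- by move=> red_r; case: eqP => // qg1; apply/reduced_consP.
- move/reduced_consP => [_ red_r head_r].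
  by case: eqP => // qg1; apply/reduced_consP.
Qed.

Lemma reduced_reduce j (u : seq (L j)) : all (@letter_in_A j) u -> reduced rQ rG (reduce u).
Proof.
elim: u => [|l u IH] //= /andP[l_A u_A].
by apply: reduced_reduce_cons => //; apply: IH.
Qed.

Lemma lenB_reduce_cons j (l : L j) r : lenB (reduce_cons l r) <= lenB (l :: r).
Proof.
rewrite /lenB; case: l => [a|[q g]] /=.
  by case: r => [|[b|bb] r] /=; case: eqP.
case: r => [|[b|[q' g']] r] /=; case: eqP => //= _; lia.
Qed.

Lemma lenB_reduce j (u : seq (L j)) : lenB (reduce u) <= lenB u.
Proof.
elim: u => [|l u IH] //=; apply: leq_trans (lenB_reduce_cons _ _) _.
by rewrite /lenB /= leq_add2l.
Qed.

Lemma reduce_lenA0 j (u : seq (L j)) :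
  lenA u = 0 -> lenA (reduce u) = 0 /\ size (reduce u) <= 1.
Proof.
elim: u => [|l u IH] //=; case: l => [a|[q g]] //= /IH[].
by case: (reduce u) => [|[b|[q' g']] [|l' r]] //= _ _; case: eqP.
Qed.

End Reduction.

Section ReduceEval.
Variable X : nat -> finType.
Variable o : forall n, X n.
Variables Q G : groupType.
Variable rQ : forall n, Q -> {perm X n}.
Variable rG : forall n, G -> {perm X n}.
Hypothesis rQM : forall n (q q' : Q) (x : X n), rQ n (q * q')%g x = rQ n q (rQ n q' x).
Hypothesis rGM : forall n (g g' : G) (x : X n), rG n (g * g')%g x = rG n g (rG n g' x).
Variables alpha beta : forall i, X i.
Hypothesis alpha_neq_beta : forall i, alpha i != beta i.

Local Notation fe := (f_eval o rQ rG alpha beta).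
Local Notation tq := (tq o rQ alpha).
Local Notation tg := (tg o rG beta).

Lemma permactM j (a b : {perm X j}) v : permact a (permact b v) = permact (b * a)%g v.
Proof. by case: v a b => //= k x v a b; rewrite permM. Qed.

Lemma permact1 j v : permact (1%g : {perm X j}) v = v.
Proof. by case: v => //= k x v; rewrite perm1. Qed.

Lemma rQ1 n : rQ n 1%g = 1%g.
Proof. by apply/permP => x; apply: (@perm_inj _ (rQ n 1%g)); rewrite -rQM mulg1 perm1. Qed.

Lemma rG1 n : rG n 1%g = 1%g.
Proof. by apply/permP => x; apply: (@perm_inj _ (rG n 1%g)); rewrite -rGM mulg1 perm1. Qed.

Lemma tqM q q' j (v : word X j) : tq (q * q')%g v = tq q (tq q' v).
Proof.
elim: v => // k x v IH /=.
case: ifP => x_o /=; rewrite ?x_o ?IH //; case: ifP => x_a /=; rewrite ?x_o ?x_a //.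
by rewrite permactM; congr (wcons x (permact _ v)); apply/permP => y; rewrite permM rQM.
Qed.

Lemma tgM g g' j (v : word X j) : tg (g * g')%g v = tg g (tg g' v).
Proof.
elim: v => // k x v IH /=.
case: ifP => x_o /=; rewrite ?x_o ?IH //; case: ifP => x_b /=; rewrite ?x_o ?x_b //.
by rewrite permactM; congr (wcons x (permact _ v)); apply/permP => y; rewrite permM rGM.
Qed.

Lemma tq1 j (v : word X j) : tq 1%g v = v.
Proof. by elim: v => // k x v IH /=; rewrite rQ1 permact1 IH; case: ifP => //; case: ifP. Qed.

Lemma tg1 j (v : word X j) : tg 1%g v = v.
Proof. by elim: v => // k x v IH /=; rewrite rG1 permact1 IH; case: ifP => //; case: ifP. Qed.

Lemma tq_tg_comm q g j (v : word X j) : tq q (tg g v) = tg g (tq q v).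
Proof.
elim: v => // k x v IH /=.
case: ifP => x_o /=; rewrite ?x_o ?IH //.
case: ifP => x_b; case: ifP => x_a /=; rewrite ?x_o ?x_a ?x_b //.
by move: (alpha_neq_beta k); rewrite -(eqP x_a) -(eqP x_b) eqxx.
Qed.

Lemma f_eval_reduce_cons j (l : letter X Q G j) r v : fe (reduce_cons l r) v = fe (l :: r) v.
Proof.
case: l => [a|[q g]].
  case: r => [|[b|bb] r] /=; rewrite ?permactM;
  by case: eqP => [->|] //=; rewrite permact1.
case: r => [|[b|[q' g']] r] /=; last rewrite -(tq_tg_comm q') -tgM -tqM;
by case: eqP => [[-> ->]|] //=; rewrite tg1 tq1.
Qed.

Lemma f_eval_reduce j (u : seq (letter X Q G j)) v : fe (reduce u) v = fe u v.
Proof. by elim: u v => //= l u IH v; rewrite f_eval_reduce_cons /= IH. Qed.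

End ReduceEval.

Section CriticalPairs.
Variable X : nat -> finType.
Variable o : forall n, X n.
Variables Q G : groupType.
Variable rQ : forall n, Q -> {perm X n}.
Variable rG : forall n, G -> {perm X n}.

Local Notation L j := (letter X Q G j).

Lemma rQ_in_A n q : rQ n q \in Agrp rQ rG n.
Proof. by apply/mem_gen/setUP; left; rewrite inE; apply/asboolP; exists q. Qed.

Lemma rG_in_A n g : rG n g \in Agrp rQ rG n.
Proof. by apply/mem_gen/setUP; right; rewrite inE; apply/asboolP; exists g. Qed.

Lemma word_perm_in_A j (w : seq (L j)) : reduced rQ rG w -> word_perm w \in Agrp rQ rG j.
Proof.
elim: w => [|l w IH] /=; first by rewrite group1.
case/reduced_consP => good_l red_w _; rewrite groupM ?IH //.
by case: l good_l => [a []|b _] //=; rewrite group1.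
Qed.

Lemma iter_section_in_A alpha beta j (w : seq (L j)) k y :
  all (letter_in_A (j := j.+1) rQ rG) (iter_section o rQ rG alpha beta w k y).
Proof.
elim: k => //= k IH; rewrite all_cat {}IH andbT.
elim: w (iter k _ y) => //= l w IH z; rewrite all_cat IH andbT.
case: l => [a|[q g]] //=; case: (_ == o j) => //=; rewrite all_cat.
by case: (_ == alpha j); case: (_ == beta j); rewrite /= ?rQ_in_A ?rG_in_A.
Qed.

Lemma Zcond_len_ge alpha beta j (w : seq (L j)) x r :
  Zcond o rQ rG alpha beta w x -> reduced rQ rG r ->
  f_eval o rQ rG alpha beta r =1 stab_section (f_eval o rQ rG alpha beta w) x ->
  lenB w <= lenB r /\ lex_lt (1, 0) (len r).
Proof.
move=> Zx red_r eval_r; rewrite /lex_lt /=.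
have len_r_ge p : has_len o rQ rG alpha beta (stab_section (f_eval o rQ rG alpha beta w) x) p ->
    (p.1 < lenB r) \/ (p.1 = lenB r /\ p.2 <= lenA r).
  case=> _ /(_ r red_r eval_r); rewrite /lex_le /lex_lt /len.
  by case: p => b a /= [[-> ->]|[|[-> /ltnW]]]; auto.
move: Zx; rewrite /Zcond; case: ifP => [lenB_gt1|_]; last case: eqP => // lenB1.
  by case=> p [/len_r_ge + p1_eq]; lia.
by case=> p [/len_r_ge]; rewrite /lex_lt lenB1 /=; lia.
Qed.

Variables Y Y' : forall i, {set X i}.
Hypothesis Y_Y'_disjoint : forall i, [disjoint Y i & Y' i].
Hypothesis rQM : forall n (q q' : Q) (x : X n), rQ n (q * q')%g x = rQ n q (rQ n q' x).
Hypothesis rGM : forall n (g g' : G) (x : X n), rG n (g * g')%g x = rG n g (rG n g' x).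

Lemma Zset_crit j (w : seq (L j)) st :
  0 < lenB w -> st \in Zset o rQ rG Y Y' w ->
  (st.1 \in crit_set o w) || (st.2 \in crit_set o w).
Proof.
move=> lenB_gt0; case: st => s t; rewrite inE /=.
case/andP=> _ /asboolP[x [alpha [beta [alpha_Y beta_Y' <- <- Zx]]]].
apply/negPn/negP; rewrite negb_or => /andP[alpha_crit beta_crit].
have alpha_neq_beta i : alpha i != beta i.
  by apply: contraTneq (alpha_Y i) => ->; rewrite (disjointFl (Y_Y'_disjoint i) (beta_Y' i)).
set u := iter_section o rQ rG alpha beta w (fingraph.order (word_perm w) x) x.
have red_r : reduced rQ rG (reduce u) by apply/reduced_reduce/iter_section_in_A.
have eval_r : f_eval o rQ rG alpha beta (reduce u) =1
              stab_section (f_eval o rQ rG alpha beta w) x.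
  by move=> v; rewrite f_eval_reduce // stab_section_f_eval.
have [lenB_le lex_r] := Zcond_len_ge Zx red_r eval_r.
have /= := iter_section_short rQ rG x lenB_gt0 alpha_crit beta_crit.
rewrite -/u => -[lenB_lt|/reduce_lenA0[lenA0 size_le1]].
  by have := lenB_reduce u; lia.
have : lenB (reduce u) <= size (reduce u) := count_size _ _.
by move: lex_r; rewrite /lex_lt /len lenA0 /=; lia.
Qed.

End CriticalPairs.

Theorem lemma2p6
  (X : nat -> finType) (o : forall n, X n) (Q G : groupType)
  (rQ : forall n, Q -> {perm X n}) (rG : forall n, G -> {perm X n})
  (Y Y' : forall i, {set X i})
  (* |X_n| >= 2 *)
  (hX : forall n, (1 < #|X n|)%N)
  (* rQ, rG are (left) group actions *)
  (hrQ : forall n (q q' : Q) (x : X n), rQ n (q * q')%g x = rQ n q (rQ n q' x))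
  (hrG : forall n (g g' : G) (x : X n), rG n (g * g')%g x = rG n g (rG n g' x))
  (* (A1) *)
  (A1 : fin_generated G /\ fin_generated Q)
  (* (A2) *)
  (A2 : perfect_group Q)
  (* (A3) *)
  (A3t : forall n, [transitive Agrp rQ rG n, on [set: X n] | 'P])
  (A3g : forall n, Agrp rQ rG n = <<\bigcup_(g in Gimg rG n) (Qimg rQ n :^ g)>>%g)
  (* Y_i, Y'_i non-empty disjoint subsets of X_i \ {o} *)
  (hY : forall i, Y i != set0) (hY' : forall i, Y' i != set0)
  (hYo : forall i, o i \notin Y i) (hY'o : forall i, o i \notin Y' i)
  (hYY' : forall i, [disjoint Y i & Y' i])
  (j : nat) (w : seq (@letter X Q G j))
  (hw : reduced rQ rG w)
  (hlen : lex_lt (1, 0)%N (len w)) :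
  (#|Zset o rQ rG Y Y' w| <= lenB w * mA rQ rG j * (#|Y j| + #|Y' j|))%N.
Proof.
have lenB_gt0 : 0 < lenB w by move: hlen; rewrite /lex_lt /len /=; lia.
set P := crit_set o w.
have card_P : #|P| <= lenB w * mA rQ rG j.
  apply: leq_trans (card_crit_set o w) _; rewrite leq_mul2l.
  by rewrite /mA leq_bigmax_cond ?orbT // word_perm_in_A.
have Z_sub : Zset o rQ rG Y Y' w \subset setX P (Y' j) :|: setX (Y j) P.
  apply/subsetP => -[s t] st_Z; have := Zset_crit hYY' hrQ hrG lenB_gt0 st_Z.
  move: st_Z; rewrite !inE /= => /andP[/andP[-> ->] _].
  by rewrite !andbT orbC.
apply: leq_trans (subset_leq_card Z_sub) _.
apply: leq_trans (leq_card_setU _ _) _.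
by rewrite !cardsX [#|Y j| * _]mulnC -mulnDr addnC leq_mul.
Qed.
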